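(* Let $P=(P_1,\ldots,P_n)$ be a profile of linear orders on a finite set $A$ with voter set $N=\{1,\ldots,n\}$, and let $i\in N$ be a potential leaf of $P$. Let $P_{-i}$ denote the profile obtained from $P$ by removing voter $i$. Then $P$ is single-crossing with respect to some tree on $N$ if and only if $P_{-i}$ is single-crossing with respect to some tree on $N\setminus\{i\}$.
   Context: Voter $j$ prefers $a$ to $b$ is written $a\succ_j b$. Given a tree $T=(V,E)$ on a voter set $V$, a profile is single-crossing with respect to $T$ if for every pair of distinct alternatives $a,b$ one of the following holds: (i) there is an edge $e\in E$ such that, removing $e$ from $T$, the two resulting subtrees have vertex sets $V_1,V_2$ with all voters in $V_1$ preferring $a$ to $b$ and all voters in $V_2$ preferring $b$ to $a$; or (ii) all voters prefer $a$ to $b$, or all voters prefer $b$ to $a$. A voter $i\in N$ is a potential leaf of $P$ if (a) the set $S_i=\{(a,b)\in A^2: a\succ_i b \text{ and } b\succ_j a \text{ for all } j\ne i\}$ is nonempty, and (b) there exists $k\in N$, $k\ne i$, such that $a\succ_i b\Leftrightarrow a\succ_k b$ for all $a,b\in A$ such that neither $(a,b)$ nor $(b,a)$ belongs to $S_i$. *)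

From mathcomp Require Import all_boot.
Set Implicit Arguments. Unset Strict Implicit. Unset Printing Implicit Defensive.

(* A (strict) linear order on A, given as a boolean relation: r a b means a ≻ b. *)
Definition linear_order (A : finType) (r : rel A) : Prop :=
  [/\ irreflexive r, transitive r & forall a b, a != b -> r a b || r b a].

Section Trees.
Variable V : finType.

Definition adj (E : {set {set V}}) : rel V := fun u v => (u != v) && ([set u; v] \in E).

Definition comp (E : {set {set V}}) (x : V) : {set V} := [set y | connect (adj E) x y].

Definition is_tree (S : {set V}) (E : {set {set V}}) : Prop :=
  [/\ S != set0,
      forall e, e \in E -> exists x y, [/\ x \in S, y \in S, x != y & e = [set x; y]],
      forall x y, x \in S -> y \in S -> connect (adj E) x y
    & #|E| = #|S| - 1].

End Trees.

Section SingleCrossing.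
Variables (V A : finType).

(* Removing an edge e = {x,y} splits
   the tree into the two subtrees with vertex sets comp (E :\ e) x and comp (E :\ e) y. *)
Definition single_crossing_wrt (P : V -> rel A) (S : {set V}) (E : {set {set V}}) : Prop :=
  forall a b : A, a != b ->
    (exists e, exists x y,
        [/\ e \in E, x != y, e = [set x; y],
            (forall j, j \in comp (E :\ e) x -> P j a b)
          & (forall j, j \in comp (E :\ e) y -> P j b a)])
    \/ (forall j, j \in S -> P j a b)
    \/ (forall j, j \in S -> P j b a).

Definition single_crossing_on (P : V -> rel A) (S : {set V}) : Prop :=
  exists E : {set {set V}}, is_tree S E /\ single_crossing_wrt P S E.

Definition S_set (P : V -> rel A) (i : V) : rel A :=
  fun a b => P i a b && [forall j, (j != i) ==> P j b a].

Definition potential_leaf (P : V -> rel A) (i : V) : Prop :=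
  (exists a b, S_set P i a b) /\
  (exists k, k != i /\
     forall a b, ~~ S_set P i a b -> ~~ S_set P i b a -> (P i a b = P k a b)).

End SingleCrossing.

From mathcomp Require Import all_boot zify.
Set Implicit Arguments. Unset Strict Implicit. Unset Printing Implicit Defensive.

(* The pair (a, b) ranked a ≻ b by the potential leaf i alone forces i to be a
   leaf of any tree witnessing single-crossingness: the edge separating the
   voters preferring a from those preferring b must cut off {i}.  Deleting that
   leaf keeps the tree and the crossing edges of all other pairs.  Conversely,
   hanging i as a leaf on the voter k it agrees with (outside S_i) works: pairs
   where i and k agree cross where they crossed before, and pairs where they
   disagree are in S_i and cross on the new edge {i, k}. *)

Section LinearOrder.
Variable A : finType.
Implicit Types (r s : rel A) (a b : A).

Lemma linear_order_asym r a b : linear_order r -> r a b -> ~~ r b a.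
Proof.
case=> irr tr _ rab; apply/negP => rba.
by have := tr _ _ _ rab rba; rewrite irr.
Qed.

Lemma linear_orders_agree r s a b : linear_order r -> linear_order s -> a != b ->
  ~~ (r a b && s b a) -> ~~ (r b a && s a b) -> r a b = s a b.
Proof.
move=> [_ _ rtot] [_ _ stot] ab; move: (rtot a b ab) (stot a b ab).
by case: (r a b); case: (s a b); case: (r b a); case: (s b a).
Qed.

End LinearOrder.

Lemma connect_homo (T T' : finType) (e : rel T) (e' : rel T') (f : T -> T') :
  (forall x y, e x y -> connect e' (f x) (f y)) ->
  forall x y, connect e x y -> connect e' (f x) (f y).
Proof.
move=> homo_f x y /connectP [p pth ->]; elim: p x pth => [|z p IHp] x //= /andP [exz].
by move/IHp; apply: connect_trans (homo_f _ _ exz).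
Qed.

Section Graph.
Variable V : finType.
Implicit Types (S : {set V}) (E F : {set {set V}}) (i k u v x : V).

Definition isolated E i := forall q, ~~ adj E i q.

Lemma adj_sym E : symmetric (adj E).
Proof. by move=> u v; rewrite /adj eq_sym setUC. Qed.

Lemma adj_subset E F : E \subset F -> subrel (adj E) (adj F).
Proof. by move=> EF u v /andP [uv /(subsetP EF) uvF]; rewrite /adj uv uvF. Qed.

Lemma mem_comp E x : x \in comp E x.
Proof. by rewrite inE connect0. Qed.

Lemma comp_subset E F x : E \subset F -> comp E x \subset comp F x.
Proof.
move=> EF; apply/subsetP => y; rewrite !inE.
by apply: connect_sub => u v /(adj_subset EF) /connect1.
Qed.

Lemma comp_isolated F i : isolated F i -> comp F i = [set i].
Proof.
move=> iso; apply/setP => y; rewrite !inE; apply/idP/eqP => [|->]; last exact: connect0.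
by case/connectP => [[|w p] //= /andP [aiw _] _]; move: aiw; rewrite (negbTE (iso w)).
Qed.

Lemma isolated_edge_notin F i k : isolated F i -> k != i -> [set i; k] \notin F.
Proof. by move=> iso ki; apply: contra (iso k) => ikF; rewrite /adj eq_sym ki ikF. Qed.

Lemma connect_contract_leaf F i k u v : k != i -> isolated F i ->
  connect (adj ([set i; k] |: F)) u v ->
  connect (adj F) (if u == i then k else u) (if v == i then k else v).
Proof.
move=> ki iso; apply: (connect_homo (f := fun z => if z == i then k else z)).
move=> p q /andP [pq]; rewrite in_setU1 => /orP [/eqP pqik | pqF].
  have to_k z : z \in [set p; q] -> (if z == i then k else z) = k.
    by rewrite pqik !inE => /orP [] /eqP ->; rewrite ?eqxx ?(negbTE ki).
  by rewrite !to_k ?inE ?eqxx ?orbT.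
have apq : adj F p q by rewrite /adj pq pqF.
have pi : p != i by apply: contraTneq apq => ->; exact: iso.
have qi : q != i by apply: contraTneq apq => ->; rewrite adj_sym; exact: iso.
by rewrite (negbTE pi) (negbTE qi) connect1.
Qed.

Lemma comp_contract_leaf F e i k x j : k != i -> isolated F i -> x != i ->
  j \in comp (([set i; k] |: F) :\ e) x -> (if j == i then k else j) \in comp (F :\ e) x.
Proof.
move=> ki iso xi; have sub : ([set i; k] |: F) :\ e \subset [set i; k] |: (F :\ e).
  apply/subsetP => f; rewrite !(in_setD1, in_setU1) => /andP [fe /orP [-> // | fF]].
  by rewrite fe fF orbT.
move/(subsetP (comp_subset x sub)); rewrite !inE => /(connect_contract_leaf ki).
rewrite (negbTE xi); apply=> q; apply: contra (iso q); exact: adj_subset (subD1set _ _) _ _.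
Qed.

Lemma tree_adj_mem S E u v : is_tree S E -> adj E u v -> u \in S.
Proof.
case=> _ edges _ _ /andP [_ /edges [x [y [xS yS _ uvxy]]]].
have : u \in [set u; v] by rewrite !inE eqxx.
by rewrite uvxy !inE => /orP [] /eqP ->.
Qed.

Lemma tree_isolated S F i : is_tree S F -> i \notin S -> isolated F i.
Proof. by move=> tF iS q; apply: contra iS => /(tree_adj_mem tF). Qed.

Lemma connect_tree_mem S F x y : is_tree S F -> x \in S -> connect (adj F) x y -> y \in S.
Proof.
move=> tF xS cxy; have clS : closed (adj F) S.
  move=> u v auv; rewrite (tree_adj_mem tF auv).
  by rewrite adj_sym in auv; rewrite (tree_adj_mem tF auv).
by rewrite -(closed_connect clS cxy).
Qed.

Lemma is_tree_leaf S F i k : k \in S -> i \notin S -> isolated F i ->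
  is_tree (i |: S) ([set i; k] |: F) <-> is_tree S F.
Proof.
move=> kS iS iso.
have ki : k != i by apply: contraNneq iS => <-.
have ikF := isolated_edge_notin iso ki.
have cardE : #|[set i; k] |: F| = #|F|.+1 by rewrite cardsU1 ikF.
have cardS : #|i |: S| = #|S|.+1 by rewrite cardsU1 iS.
have S_gt0 : 0 < #|S| by apply/card_gt0P; exists k.
rewrite /is_tree cardE cardS; split.
- case=> _ edges conn card; split.
  + by apply/set0Pn; exists k.
  + have memS u v : u \in i |: S -> adj F u v -> u \in S.
      by rewrite in_setU1 => /orP [/eqP -> | //]; rewrite (negbTE (iso v)).
    move=> e eF; have [x [y [xS yS xy exy]]] := edges e (setU1r _ eF).
    have axy : adj F x y by rewrite /adj xy -exy.
    exists x, y; split => //.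
    * exact: memS xS axy.
    * by apply: (memS y x yS); rewrite adj_sym.
  + move=> u v uS vS.
    have := connect_contract_leaf ki iso (conn u v (setU1r _ uS) (setU1r _ vS)).
    by rewrite !ifF //; apply: contraNF iS => /eqP <-.
  + lia.
- case=> _ edges conn card; have subF : F \subset [set i; k] |: F := subsetUr _ _.
  have to_k u : u \in i |: S -> connect (adj ([set i; k] |: F)) u k.
    rewrite in_setU1 => /orP [/eqP -> | uS].
      by apply: connect1; rewrite /adj eq_sym ki setU11.
    by apply: connect_sub (conn u k uS kS) => p q /(adj_subset subF) /connect1.
  split.
  + by apply/set0Pn; exists i; exact: setU11.
  + move=> e; rewrite in_setU1 => /orP [/eqP -> | /edges [x [y [xS yS xy ->]]]].
      by exists i, k; rewrite setU11 setU1r // eq_sym.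
    by exists x, y; rewrite !setU1r.
  + move=> u v uS vS; apply: connect_trans (to_k u uS) _.
    by rewrite (sym_connect_sym (@adj_sym _)) to_k.
  + lia.
Qed.

End Graph.

Section SingleCrossing.
Variables (V A : finType) (P : V -> rel A).
Implicit Types (S : {set V}) (E F : {set {set V}}) (i k : V).

Lemma single_crossing_sole_leaf S E i k a b :
  is_tree S E -> single_crossing_wrt P S E -> i \in S -> k \in S -> k != i ->
  ~~ P i b a -> (forall j, j \in S -> P j a b = (j == i)) ->
  exists y, [/\ y \in S :\ i, [set i; y] \in E & isolated (E :\ [set i; y]) i].
Proof.
move=> tE sc iS kS ki nPiba sole.
have Piab : P i a b by rewrite sole ?eqxx.
have ab : a != b by apply: contraNneq nPiba => eqab; move: Piab; rewrite eqab.
case: (sc a b ab) => [[e [x [y [eE xy exy Hx Hy]]]] | [allab | allba]]; first last.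
- by move: nPiba; rewrite allba.
- by move: (allab k kS); rewrite sole // (negbTE ki).
have axy : adj E x y by rewrite /adj xy -exy.
have xi : x = i by apply/eqP; rewrite -sole ?(tree_adj_mem tE axy) ?Hx ?mem_comp.
subst x e; exists y; split => //.
- by rewrite in_setD1 eq_sym xy; apply: (tree_adj_mem tE (v := i)); rewrite adj_sym.
- move=> q; apply/negP => aiq.
  have qS : q \in S.
    apply: (tree_adj_mem tE (v := i)); rewrite adj_sym.
    exact: adj_subset (subD1set _ _) _ _ aiq.
  have /eqP qi : q == i by rewrite -sole // Hx // inE connect1.
  by move: aiq; rewrite /adj qi eqxx.
Qed.

Lemma single_crossing_remove_leaf S F i k : is_tree S F -> k \in S -> i \notin S ->
  single_crossing_wrt P (i |: S) ([set i; k] |: F) -> single_crossing_wrt P S F.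
Proof.
move=> tF kS iS sc a b ab; have iso := tree_isolated tF iS.
have ki : k != i by apply: contraNneq iS => <-.
have ikF := isolated_edge_notin iso ki.
have [_ _ conn _] := tF.
case: (sc a b ab) => [[e [x [y [eE xy exy Hx Hy]]]] | [allab | allba]]; last 2 first.
- by right; left => j jS; apply: allab; rewrite setU1r.
- by right; right => j jS; apply: allba; rewrite setU1r.
move: eE; rewrite in_setU1 => /orP [/eqP eik | eF]; last first.
  have sub z : comp (F :\ e) z \subset comp (([set i; k] |: F) :\ e) z.
    exact/comp_subset/setSD/subsetUr.
  by left; exists e, x, y; split => // j /(subsetP (sub _)); [apply: Hx | apply: Hy].
rewrite eik setU1K // in Hx Hy.
have : x \in [set i; k] by rewrite -eik exy !inE eqxx.
rewrite !inE => /orP [/eqP xi | /eqP xk].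
  have : y \in [set i; k] by rewrite -eik exy !inE eqxx orbT.
  rewrite !inE -xi eq_sym (negbTE xy) => /eqP yk.
  by right; right => j jS; apply: Hy; rewrite inE yk conn.
by right; left => j jS; apply: Hx; rewrite inE xk conn.
Qed.

Lemma single_crossing_add_leaf S F i k :
  linear_order (P i) -> linear_order (P k) -> is_tree S F -> k \in S -> i \notin S ->
  (forall a b, P i a b -> P k b a -> forall j, j \in S -> P j b a) ->
  single_crossing_wrt P S F -> single_crossing_wrt P (i |: S) ([set i; k] |: F).
Proof.
move=> Pi Pk tF kS iS disagree_ik sc a b ab; have iso := tree_isolated tF iS.
have ki : k != i by apply: contraNneq iS => <-.
have dropE : ([set i; k] |: F) :\ [set i; k] = F by rewrite setU1K ?isolated_edge_notin.
have comp_i j : j \in comp F i -> j = i by rewrite comp_isolated // => /set1P.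
have comp_k j : j \in comp F k -> j \in S by rewrite inE; exact: connect_tree_mem.
have [/andP [Piab Pkba] | iab_kba] := boolP (P i a b && P k b a).
  left; exists [set i; k], i, k; rewrite dropE eq_sym ki setU11; split => // j.
    by move/comp_i ->.
  by move/comp_k; exact: disagree_ik.
have [/andP [Piba Pkab] | iba_kab] := boolP (P i b a && P k a b).
  left; exists [set i; k], k, i; rewrite dropE ki setU11 setUC; split => // j.
    by move/comp_k; exact: disagree_ik.
  by move/comp_i ->.
have agree_ab := linear_orders_agree Pi Pk ab iab_kba iba_kab.
have agree_ba : P i b a = P k b a by apply: linear_orders_agree => //; rewrite eq_sym.
case: (sc a b ab) => [[e [x [y [eF xy exy Hx Hy]]]] | [allab | allba]].
- have axy : adj F x y by rewrite /adj xy -exy.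
  have xi : x != i by apply: contraNneq iS => <-; exact: tree_adj_mem axy.
  have yi : y != i.
    by apply: contraNneq iS => <-; rewrite adj_sym in axy; exact: tree_adj_mem axy.
  left; exists e, x, y; split => //; first by rewrite setU1r.
    move=> j /(comp_contract_leaf ki iso xi); case: eqP => [-> | _] /Hx //.
    by rewrite agree_ab.
  move=> j /(comp_contract_leaf ki iso yi); case: eqP => [-> | _] /Hy //.
  by rewrite agree_ba.
- right; left => j; rewrite in_setU1 => /orP [/eqP -> | ]; last exact: allab.
  by rewrite agree_ab allab.
- right; right => j; rewrite in_setU1 => /orP [/eqP -> | ]; last exact: allba.
  by rewrite agree_ba allba.
Qed.

End SingleCrossing.

Theorem lemma2 (V A : finType) (P : V -> rel A)
  (HP : forall j, linear_order (P j)) (i : V) (Hi : potential_leaf P i) :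
  single_crossing_on P [set: V] <-> single_crossing_on P ([set: V] :\ i).
Proof.
have [[a [b /andP [Piab /forallP only_i]]] [k [ki agree]]] := Hi.
set S := [set: V] :\ i.
have kS : k \in S by rewrite !inE ki.
have iS : i \notin S by rewrite !inE eqxx.
rewrite /single_crossing_on -(setD1K (in_setT i)) -/S; split.
- case=> E [tE scE].
  have sole j : j \in i |: S -> P j a b = (j == i).
    case: eqP => [-> // | /eqP ji] _.
    by apply/negbTE/(linear_order_asym (HP j)); exact: implyP (only_i j) ji.
  have [y [yS yE iso]] := single_crossing_sole_leaf tE scE (setU11 _ _) (setU1r _ kS) ki
    (linear_order_asym (HP i) Piab) sole.
  rewrite setU1K // in yS; rewrite -(setD1K yE) in tE scE.
  have tF := (is_tree_leaf yS iS iso).1 tE.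
  by exists (E :\ [set i; y]); split; last exact: single_crossing_remove_leaf tF yS iS scE.
- case=> F [tF scF]; exists ([set i; k] |: F); split.
    by apply/is_tree_leaf => //; exact: tree_isolated tF iS.
  apply: single_crossing_add_leaf => // c d Picd Pkdc j; rewrite !inE => /andP [ji _].
  have Scd : S_set P i c d.
    apply: contraT => nScd; have nSdc : ~~ S_set P i d c.
      by apply: contraL Picd => /andP [Pidc _]; exact: linear_order_asym (HP i) Pidc.
    by move: (agree c d nScd nSdc); rewrite Picd (negbTE (linear_order_asym (HP k) Pkdc)).
  by case/andP: Scd => _ /forallP /(_ j) /implyP; apply.
Qed.
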